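(* Let $\mathcal{G}$ be a MAG on vertex set $V$ and $W\subseteq V$. Then $\mathcal{S}(\mathcal{G}_W)\subseteq\mathcal{S}(\mathcal{G})\cap\mathcal{P}(W)$, where $\mathcal{P}(W)$ is the power set of $W$.
   Context: A MAG is an acyclic directed mixed graph (directed and bidirected edges, no directed cycles) with $\mathrm{sib}(v)\cap\mathrm{an}(v)=\emptyset$ for all $v$ and in which every nonadjacent pair is m-separated by some set; induced subgraphs $\mathcal{G}_W$ of MAGs are MAGs. For a MAG $\mathcal{G}$: $\mathrm{barren}(U)=\{u\in U:\mathrm{de}(u)\cap U=\{u\}\}$; a nonempty $H$ is a head if $\mathrm{barren}(H)=H$ and $H$ lies in a single district (bidirected-connected component) of $\mathcal{G}_{\mathrm{an}(H)}$; $\mathrm{tail}(H)=(\mathrm{dis}_{\mathrm{an}(H)}(H)\setminus H)\cup\mathrm{pa}(\mathrm{dis}_{\mathrm{an}(H)}(H))$; the parametrizing sets are $\mathcal{S}(\mathcal{G})=\{H\cup A:H\text{ a head},A\subseteq\mathrm{tail}(H)\}$. $\mathcal{S}(\mathcal{G}_W)$ is the same construction applied to the MAG $\mathcal{G}_W$. *)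

(* A mixed graph on a finite type V is given by a vertex set
   S : {set V} and two relations d (directed: d x y means x -> y) and
   b (bidirected; symmetrised below).  Only edges between vertices of S count,
   so the induced subgraph G_W is simply (W, d, b). *)
From mathcomp Require Import all_boot.
Set Implicit Arguments. Unset Strict Implicit. Unset Printing Implicit Defensive.

Section MAG.
Variables (V : finType) (S : {set V}) (d b : rel V).

Definition dE : rel V := fun x y => [&& x \in S, y \in S & d x y].
Definition bE : rel V := fun x y => [&& x \in S, y \in S & (b x y || b y x)].

Definition adj (x y : V) : bool := [|| dE x y, dE y x | bE x y].

Definition an (A : {set V}) : {set V} := [set v in S | [exists a in A, connect dE v a]].
Definition de (u : V) : {set V} := [set w in S | connect dE u w].
Definition pa (A : {set V}) : {set V} := [set v in S | [exists a in A, dE v a]].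
Definition sib (v : V) : {set V} := [set w | bE v w].

Definition acyclic : Prop := forall x y, dE x y -> ~~ connect dE y x.
Definition ancestral : Prop := forall v, v \in S -> sib v :&: an [set v] = set0.

Definition arrow_at (u v : V) : bool := dE u v || bE u v.
Definition collider (u v w : V) : bool := arrow_at u v && arrow_at w v.

Definition m_connecting (x y : V) (Z : {set V}) (p : seq V) : Prop :=
  let l := x :: p in
  [/\ uniq l, path adj x p, last x p = y &
      forall i, 0 < i -> i < (size l).-1 ->
        let u := nth x l i.-1 in let v := nth x l i in let w := nth x l i.+1 in
        if collider u v w then v \in an Z else v \notin Z].

Definition m_separated (x y : V) (Z : {set V}) : Prop :=
  forall p : seq V, ~ m_connecting x y Z p.

Definition maximal : Prop :=
  forall x y, x \in S -> y \in S -> x != y -> ~~ adj x y ->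
    exists Z : {set V}, Z \subset S :\: [set x; y] /\ m_separated x y Z.

Definition isMAG : Prop := [/\ acyclic, ancestral & maximal].

Definition barren (U : {set V}) : {set V} := [set u in U | de u :&: U == [set u]].

Definition bIn (A : {set V}) : rel V := fun x y => [&& x \in A, y \in A & bE x y].

Definition dis_in (A H : {set V}) : {set V} :=
  [set v in A | [exists h in H, (h \in A) && connect (bIn A) h v]].

Definition is_head (H : {set V}) : bool :=
  [&& H != set0, H \subset S, barren H == H &
      [exists h0 in H, [forall h in H, connect (bIn (an H)) h0 h]]].

Definition tail (H : {set V}) : {set V} :=
  (dis_in (an H) H :\: H) :|: pa (dis_in (an H) H).

Definition param_sets : {set {set V}} :=
  [set X | [exists H : {set V}, is_head H &&
            [exists A : {set V}, (A \subset tail H) && (X == H :|: A)]]].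

End MAG.

(* A head H of G_W need not be barren in G, since directed paths may leave W;
   so let H' be the vertices of H that are barren in G.  By acyclicity every
   vertex of H is a G-ancestor of H', so an_W(H) lies inside an(H') and the
   bidirected connections witnessing that H is a head of G_W survive in
   G_an(H').  Hence H' is a head of G whose district contains all of H and of
   the district of H in G_W; the vertices of H :\: H' and of tail_W(H)
   therefore lie in tail(H'), and H :|: A = H' :|: ((H :|: A) :\: H'). *)
From mathcomp Require Import all_boot.
Set Implicit Arguments. Unset Strict Implicit. Unset Printing Implicit Defensive.

Section MixedGraph.
Variables (V : finType) (d b : rel V).

Lemma connect_dE_subset (W S : {set V}) x y :
  W \subset S -> connect (dE W d) x y -> connect (dE S d) x y.
Proof.
move=> sWS; apply: connect_sub => {}x {}y /and3P [xW yW dxy].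
by apply: connect1; rewrite /dE (subsetP sWS _ xW) (subsetP sWS _ yW) dxy.
Qed.

Lemma an_subset (W S H : {set V}) : W \subset S -> an W d H \subset an S d H.
Proof.
move=> sWS; apply/subsetP => v; rewrite !inE => /andP [vW /existsP [a /andP [aH cva]]].
rewrite (subsetP sWS _ vW); apply/existsP; exists a.
by rewrite aH (connect_dE_subset sWS cva).
Qed.

Lemma subset_an (S H : {set V}) : H \subset S -> H \subset an S d H.
Proof.
move=> sHS; apply/subsetP => h hH; rewrite inE (subsetP sHS _ hH).
by apply/existsP; exists h; rewrite hH connect0.
Qed.

Lemma barren_subset (S H : {set V}) : barren S d H \subset H.
Proof. by apply/subsetP => h; rewrite inE => /andP []. Qed.

Lemma bIn_sym (S A : {set V}) : symmetric (bIn S b A).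
Proof.
move=> x y; rewrite /bIn /bE [b y x || _]orbC.
by do 2!case: (_ \in A); do 2!case: (_ \in S).
Qed.

Lemma connect_bIn_subset (W S A B : {set V}) x y :
  W \subset S -> A \subset B ->
  connect (bIn W b A) x y -> connect (bIn S b B) x y.
Proof.
move=> sWS sAB; apply: connect_sub => {}x {}y /and3P [xA yA /and3P [xW yW bxy]].
apply: connect1; rewrite /bIn /bE (subsetP sAB _ xA) (subsetP sAB _ yA).
by rewrite (subsetP sWS _ xW) (subsetP sWS _ yW).
Qed.

Lemma subset_dis_in (S A H : {set V}) : H \subset A -> H \subset dis_in S b A H.
Proof.
move=> sHA; apply/subsetP => h hH; rewrite inE (subsetP sHA _ hH).
by apply/existsP; exists h; rewrite hH (subsetP sHA _ hH) connect0.
Qed.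

Lemma head_subset (S H : {set V}) : is_head S d b H -> H \subset S.
Proof. by case/and4P. Qed.

Lemma head_connected (S H : {set V}) : is_head S d b H ->
  {in H &, forall h h', connect (bIn S b (an S d H)) h h'}.
Proof.
case/and4P => _ _ _ /existsP [h0 /andP [_ /forallP conn0]] h h' hH h'H.
have csym := sym_connect_sym (bIn_sym S (an S d H)).
by rewrite (connect_trans _ (implyP (conn0 h') h'H)) // csym (implyP (conn0 h)).
Qed.

Lemma tail_subset (S H : {set V}) : tail S d b H \subset S.
Proof.
by apply/subsetP => x; rewrite !inE => /orP [/and3P [_ /andP [-> _] _] | /andP [-> _]].
Qed.

Lemma param_setsP (S X : {set V}) :
  reflect (exists2 H, is_head S d b H &
             exists2 A : {set V}, A \subset tail S d b H & X = H :|: A)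
          (X \in param_sets S d b).
Proof.
rewrite inE; apply: (iffP existsP) => [[H /andP [hH /existsP [A /andP [sAt /eqP ->]]]]|].
  by exists H => //; exists A.
case=> H hH [A sAt ->]; exists H; rewrite hH /=.
by apply/existsP; exists A; rewrite sAt eqxx.
Qed.

Lemma param_sets_subset_powerset (S : {set V}) : param_sets S d b \subset powerset S.
Proof.
apply/subsetP => X /param_setsP [H /head_subset sHS [A sAt ->]].
by rewrite powersetE subUset sHS (subset_trans sAt (tail_subset S H)).
Qed.

Hypothesis acyc : acyclic [set: V] d.

Lemma connect_dE_anti x y :
  connect (dE [set: V] d) x y -> connect (dE [set: V] d) y x -> x = y.
Proof.
case/connectP => [[|z p] //= /andP [exz pzp] ->] cyx.
have czx : connect (dE [set: V] d) z x.
  by apply: connect_trans cyx; apply/connectP; exists p.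
by move: (acyc exz); rewrite czx.
Qed.

(* A descendant of v in H with fewest descendants in H is barren. *)
Lemma exists_barren_descendant (H : {set V}) v : v \in H ->
  exists2 h, h \in barren [set: V] d H & connect (dE [set: V] d) v h.
Proof.
move=> vH; pose P w := (w \in H) && connect (dE [set: V] d) v w.
have Pv : P v by rewrite /P vH connect0.
case: (arg_minnP (fun w => #|de [set: V] d w :&: H|) Pv) => w /andP [wH cvw] wmin.
exists w => //; rewrite inE wH eqEsubset sub1set !inE connect0 wH /= andbT.
apply/subsetP => y; rewrite !inE => /andP [cwy yH]; apply: contraT => nyw.
have deyw : de [set: V] d y :&: H \proper de [set: V] d w :&: H.
  apply/properP; split.
    apply/subsetP => z; rewrite !inE => /andP [cyz ->].
    by rewrite (connect_trans cwy cyz).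
  exists w; first by rewrite !inE connect0 wH.
  rewrite !inE wH andbT; apply/negP => cyw.
  by move: nyw; rewrite (connect_dE_anti cwy cyw) eqxx.
have := wmin y; rewrite /P yH (connect_trans cvw cwy) => /(_ isT).
by rewrite leqNgt proper_card.
Qed.

Lemma an_subset_an_barren (H : {set V}) :
  an [set: V] d H \subset an [set: V] d (barren [set: V] d H).
Proof.
apply/subsetP => v; rewrite !inE => /existsP [a /andP [aH cva]].
have [h hB cah] := exists_barren_descendant aH.
by apply/existsP; exists h; rewrite hB (connect_trans cva cah).
Qed.

Section HeadOfInducedSubgraph.
Variables (W H : {set V}).
Hypothesis headH : is_head W d b H.

Local Notation H' := (barren [set: V] d H).

Lemma an_induced_subset_an_barren : an W d H \subset an [set: V] d H'.
Proof. exact: subset_trans (an_subset _ (subsetT W)) (an_subset_an_barren H). Qed.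

Lemma head_connected_barren :
  {in H &, forall h h', connect (bIn [set: V] b (an [set: V] d H')) h h'}.
Proof.
move=> h h' hH h'H; apply: connect_bIn_subset (subsetT W) _ _.
  exact: an_induced_subset_an_barren.
exact: head_connected.
Qed.

Lemma barren_neq0 : H' != set0.
Proof.
case/and4P: headH => /set0Pn [h hH] _ _ _.
by have [h' h'B _] := exists_barren_descendant hH; apply/set0Pn; exists h'.
Qed.

Lemma is_head_barren : is_head [set: V] d b H'.
Proof.
have sH'H := barren_subset [set: V] H.
apply/and4P; split; [exact: barren_neq0 | exact: subsetT | |].
  apply/eqP/setP => u; apply/idP/idP => [|uB]; first by case/setIdP.
  rewrite inE uB eqEsubset sub1set inE uB andbT /= !inE connect0 !andbT.
  by have := uB; rewrite inE => /andP [_ /eqP <-]; apply: setIS.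
have /set0Pn [h0 h0B] := barren_neq0.
apply/existsP; exists h0; rewrite h0B; apply/forallP => h; apply/implyP => hB.
exact: head_connected_barren (subsetP sH'H _ h0B) (subsetP sH'H _ hB).
Qed.

Lemma dis_in_barren :
  dis_in W b (an W d H) H \subset dis_in [set: V] b (an [set: V] d H') H'.
Proof.
have /set0Pn [h0 h0B] := barren_neq0.
have h0H := subsetP (barren_subset [set: V] H) _ h0B.
apply/subsetP => v; rewrite inE => /andP [va /existsP [h /and3P [hH _ chv]]].
rewrite inE (subsetP an_induced_subset_an_barren _ va); apply/existsP; exists h0.
rewrite h0B (subsetP (subset_an (subsetT _)) _ h0B).
apply: connect_trans (head_connected_barren h0H hH) _.
exact: connect_bIn_subset (subsetT W) an_induced_subset_an_barren chv.
Qed.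

Lemma tail_barren : (H :|: tail W d b H) :\: H' \subset tail [set: V] d b H'.
Proof.
have sHdis : H \subset dis_in W b (an W d H) H.
  exact/subset_dis_in/subset_an/head_subset.
apply/subsetP => x /setDP [/setUP xHt xnB]; rewrite /tail in_setU in_setD xnB /=.
case: xHt => [xH | /setUP [/setDP [xdis _] | xpa]].
- by rewrite (subsetP dis_in_barren _ (subsetP sHdis _ xH)).
- by rewrite (subsetP dis_in_barren _ xdis).
move: xpa; rewrite inE => /andP [_ /existsP [a /andP [adis /and3P [_ _ dxa]]]].
apply/orP; right; rewrite inE in_setT; apply/existsP; exists a.
by rewrite (subsetP dis_in_barren _ adis) /dE !inE dxa.
Qed.

End HeadOfInducedSubgraph.
End MixedGraph.

Theorem corollaryB3 (V : finType) (d b : rel V) (W : {set V}) :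
  isMAG [set: V] d b ->
  param_sets W d b \subset param_sets [set: V] d b :&: powerset W.
Proof.
case=> acyc _ _; apply/subsetP => X XW.
rewrite inE (subsetP (param_sets_subset_powerset d b W) _ XW) andbT.
case/param_setsP: XW => H headH [A sAt ->].
set H' := barren [set: V] d H.
have sH'X : H' \subset H :|: A := subset_trans (barren_subset _ _ _) (subsetUl _ _).
apply/param_setsP; exists H'; first exact: (is_head_barren acyc headH).
exists ((H :|: A) :\: H'); last by rewrite -{1}(setID (H :|: A) H') (setIidPr sH'X).
apply: subset_trans (tail_barren acyc headH).
by apply/setSD/setUS.
Qed.
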